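(* Let $G'=(V',E')$ be a substructure of an oriented graph $G$ with $|V'|\ge|E'|$, and let $\omega\in\mathbb{C}$ with $|\omega|=1$. If $\det L_\omega(G')\neq 0$, then $G'$ is all-regular, i.e. every connected component $(V'_i,E'_i)$ of $G'$ satisfies $|V'_i|=|E'_i|$.
   Context: An oriented graph $G=(V,E)$ is a finite directed graph with no loops, no multiple arcs, and no pair of opposite arcs. A substructure of $G$ is a pair $G'=(V',E')$ with $V'\subseteq V$, $E'\subseteq E$; arcs of $E'$ may have endpoints outside $V'$. The Hermitian Laplacian $L_\omega(G')$ is the $V'\times V'$ matrix with diagonal entry at $u$ equal to the number of arcs of $E'$ incident with $u$, and $(u,v)$ entry ($u\ne v$) equal to $-\omega$ if some arc of $E'$ goes $u\to v$, $-\overline\omega$ if some arc of $E'$ goes $v\to u$, $0$ otherwise. Two vertices $u,v\in V'$ are connected in $G'$ if there is a path between them (ignoring arc directions) with all vertices in $V'$ and all arcs in $E'$; the equivalence classes $V'_i$ give the connected components $(V'_i,E'_i)$, where $E'_i$ is the set of arcs of $E'$ with at least one endpoint in $V'_i$. A substructure is regular if $|V'|=|E'|$ and all-regular if each connected component is regular. *)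

From HB Require Import structures.
From mathcomp Require Import all_boot all_order all_algebra.
Set Implicit Arguments.
Unset Strict Implicit.
Unset Printing Implicit Defensive.
Import Order.TTheory GRing.Theory Num.Theory.
Local Open Scope ring_scope.

(* An oriented graph on a finite vertex type V: a set of arcs (u,v) = u -> v,
   with no loops and no pair of opposite arcs (multiple arcs are excluded
   automatically since E is a set). *)
Definition oriented_graph (V : finType) (E : {set V * V}) : Prop :=
  (forall u : V, (u, u) \notin E) /\
  (forall u v : V, (u, v) \in E -> (v, u) \notin E).

Definition substructure (V : finType) (E : {set V * V})
    (V' : {set V}) (E' : {set V * V}) : Prop :=
  E' \subset E.

Definition arc_degree (V : finType) (E' : {set V * V}) (u : V) : nat :=
  #|[set e in E' | (e.1 == u) || (e.2 == u)]|.

Definition herm_laplacian (C : numClosedFieldType) (omega : C) (V : finType)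
    (V' : {set V}) (E' : {set V * V}) : 'M[C]_#|V'| :=
  \matrix_(i < #|V'|, j < #|V'|)
    let u := enum_val i in let v := enum_val j in
    if u == v then (arc_degree E' u)%:R
    else if (u, v) \in E' then - omega
    else if (v, u) \in E' then - (omega^*)%R
    else 0.

Definition sub_adj (V : finType) (V' : {set V}) (E' : {set V * V}) : rel V :=
  fun x y => [&& x \in V', y \in V' & ((x, y) \in E') || ((y, x) \in E')].

Definition comp_vertices (V : finType) (V' : {set V}) (E' : {set V * V}) (u : V)
  : {set V} := [set v in V' | connect (sub_adj V' E') u v].

Definition comp_arcs (V : finType) (V' : {set V}) (E' : {set V * V}) (u : V)
  : {set V * V} :=
  [set e in E' | (e.1 \in comp_vertices V' E' u) || (e.2 \in comp_vertices V' E' u)].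

Definition all_regular (V : finType) (V' : {set V}) (E' : {set V * V}) : Prop :=
  forall u, u \in V' -> #|comp_vertices V' E' u| = #|comp_arcs V' E' u|.

From mathcomp Require Import all_boot all_order all_algebra.
From mathcomp Require Import ring.
Import Order.TTheory GRing.Theory Num.Theory.
Set Implicit Arguments.
Unset Strict Implicit.
Unset Printing Implicit Defensive.
Local Open Scope ring_scope.

(* The Hermitian Laplacian factors as [L = N N^*], where [N] is the V' x E'
   incidence matrix whose column for the arc (a, b) is [1_a - omega^* 1_b]; this
   uses [|omega| = 1] together with the absence of loops and of opposite arcs.
   The rows of [N] indexed by a component are supported on the arcs of that
   component, so a component with fewer arcs than vertices yields a nonzero
   left kernel vector of [N], and [det L = 0]. Hence [det L <> 0] gives
   [|V'_i| <= |E'_i|] for every component; as an arc belongs to at most one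
   component, summing gives [|V'| <= sum_i |E'_i| <= |E'| <= |V'|], so every
   inequality is an equality. *)

Lemma exists_left_kernel_support (F : fieldType) m n (N : 'M[F]_(m, n))
    (K : {set 'I_m}) (A : {set 'I_n}) :
  (#|A| < #|K|)%N -> (forall i k, i \in K -> k \notin A -> N i k = 0) ->
  exists2 y : 'rV_m, y != 0 & y *m N = 0.
Proof.
move=> ltAK N0.
pose f : 'I_#|K| -> 'I_m := enum_val; pose g : 'I_#|A| -> 'I_n := enum_val.
have : kermx (mxsub f g N) != 0.
  by rewrite -mxrank_eq0 mxrank_ker subn_eq0 -ltnNge (leq_ltn_trans (rank_leq_col _)).
case/rowV0Pn => z /sub_kermxP zM nz_z.
(* [z] kills the K x A block of [N], and the rows in K vanish outside A. *)
exists (z *m rowsub f 1%:M).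
  have f_rinv : rowsub f 1%:M *m colsub f 1%:M = 1%:M :> 'M[F]_#|K|.
    by rewrite mul_rowsub_mx mul1mx; apply/matrixP => i j; rewrite !mxE (inj_eq enum_val_inj).
  by apply: contraNneq nz_z => z0; rewrite -[z]mulmx1 -f_rinv mulmxA z0 mul0mx.
rewrite -mulmxA -rowsubE; apply/rowP => k; rewrite !mxE.
have [kA|kA] := boolP (k \in A).
  move/rowP/(_ (enum_rank_in kA k)): zM; rewrite !mxE; apply: etrans.
  by apply: eq_bigr => i _; rewrite !mxE /g enum_rankK_in.
by rewrite big1 // => i _; rewrite !mxE N0 ?mulr0 // enum_valP.
Qed.

Lemma card_setId_sum (T : finType) (A : {pred T}) (P : pred T) :
  #|[set t in A | P t]| = (\sum_(t in A) P t)%N.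
Proof. by rewrite -big_mkcondr sum1dep_card. Qed.

Lemma sumr_nat_card (R : pzSemiRingType) (T : finType) (A : {pred T}) (P : pred T) :
  \sum_(t in A) (P t)%:R = #|[set t in A | P t]|%:R :> R.
Proof. by rewrite card_setId_sum natr_sum. Qed.

Lemma card_enum_val_preim (T : finType) (D S : {set T}) :
  S \subset D -> #|[set i : 'I_#|D| | enum_val i \in S]| = #|S|.
Proof.
move=> /subsetP sSD; rewrite -(card_imset _ enum_val_inj); apply: eq_card => x.
apply/imsetP/idP => [[i] | xS]; first by rewrite inE => iS ->.
by exists (enum_rank_in (sSD x xS) x); rewrite ?inE enum_rankK_in ?sSD.
Qed.

Lemma sumr_nat_eq (R : pzSemiRingType) (T : finType) (A : {pred T}) (a : T) :
  \sum_(t in A) (t == a)%:R = (a \in A)%:R :> R.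
Proof.
case aA: (a \in A).
  by rewrite (bigD1 a) //= eqxx big1 ?addr0 // => t /andP[_ /negbTE ->].
by rewrite big1 // => t tA; case: eqP => // ta; rewrite -ta tA in aA.
Qed.

Section Incidence.
Variables (C : numClosedFieldType) (V : finType) (omega : C).

Definition incidence (e : V * V) (x : V) : C := (x == e.1)%:R - omega^* * (x == e.2)%:R.

Definition incidence_mx (V' : {set V}) (E' : {set V * V}) : 'M[C]_(#|V'|, #|E'|) :=
  \matrix_(i, k) incidence (enum_val k) (enum_val i).

Hypothesis omega_norm1 : `|omega| = 1.

Lemma incidence_mul_conj e x y :
  incidence e x * (incidence e y)^* =
    ((x == e.1) && (y == e.1))%:R + ((x == e.2) && (y == e.2))%:R
    - omega * (e == (x, y))%:R - omega^* * (e == (y, x))%:R.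
Proof.
case: e => a b; rewrite /incidence rmorphB rmorphM /= conjCK !conjC_nat.
have conj_omega_mul : omega^* * omega = 1 by rewrite -normCKC omega_norm1 expr1n.
rewrite -!pair_eqE /= !(eq_sym a) !(eq_sym b) -!mulnb !natrM.
rewrite mulrBl !mulrBr mulrACA conj_omega_mul mul1r; ring.
Qed.

Variables (E : {set V * V}) (V' : {set V}) (E' : {set V * V}).
Hypotheses (E_oriented : oriented_graph E) (sub_E'E : E' \subset E).

Lemma sum_incidence_mul_conj x y :
  \sum_(e in E') incidence e x * (incidence e y)^* =
  if x == y then (arc_degree E' x)%:R
  else if (x, y) \in E' then - omega
  else if (y, x) \in E' then - omega^*
  else 0.
Proof.
have [no_loop antisym] := E_oriented.
have loopfree e : e \in E' -> e.1 != e.2.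
  case: e => a b /(subsetP sub_E'E) /=; apply: contraTneq => ->; exact: no_loop.
have [<-|neq_xy] := eqVneq x y.
  rewrite /arc_degree -sumr_nat_card; apply: eq_bigr => e eE.
  rewrite incidence_mul_conj !andbb.
  have := loopfree e eE; case: e {eE} => a b /= ab.
  rewrite xpair_eqE (eq_sym a) (eq_sym b).
  have [-> | _] := eqVneq x a.
    by rewrite (negbTE ab) /= !mulr0 !subr0 addr0.
  by case: (x == b); rewrite /= !mulr0 !subr0 ?add0r ?addr0.
rewrite (eq_bigr (fun e => - (omega * (e == (x, y))%:R) - omega^* * (e == (y, x))%:R)).
  rewrite big_split /= !sumrN -!mulr_sumr !sumr_nat_eq.
  case: ifP => xyE.
    have yxE : ((y, x) \in E') = false.
      by apply: contraNF (antisym _ _ (subsetP sub_E'E _ xyE)) => /(subsetP sub_E'E).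
    by rewrite yxE mulr0 subr0 mulr1.
  by case: ifP => yxE; rewrite /= ?mulr1n ?mulr0n ?mulr1 ?mulr0 ?oppr0 ?sub0r ?subr0 ?addr0.
move=> e _; rewrite incidence_mul_conj.
have notboth z : ((x == z) && (y == z)) = false.
  by apply: contra_neqF neq_xy => /andP[/eqP-> /eqP->].
by rewrite !notboth add0r sub0r.
Qed.

Lemma herm_laplacianE :
  herm_laplacian omega V' E' =
    incidence_mx V' E' *m (map_mx Num.conj (incidence_mx V' E'))^T.
Proof.
apply/matrixP => i j; rewrite !mxE /= -sum_incidence_mul_conj big_enum_val.
by apply: eq_bigr => k _; rewrite !mxE.
Qed.
End Incidence.

Section Components.
Variables (V : finType) (V' : {set V}) (E' : {set V * V}).
Local Notation adj := (sub_adj V' E').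
Local Notation comp := (comp_vertices V' E').

Lemma sub_adj_sym : symmetric adj.
Proof. by move=> x y; rewrite /sub_adj andbCA orbC. Qed.

Lemma comp_vertices_sub u : comp u \subset V'.
Proof. by apply/subsetP => x; rewrite inE => /andP[]. Qed.

Lemma comp_arcs_sub u : comp_arcs V' E' u \subset E'.
Proof. by apply/subsetP => e; rewrite inE => /andP[]. Qed.

Lemma comp_vertices_connect x y : connect adj x y -> comp x = comp y.
Proof.
have adj_csym := sym_connect_sym sub_adj_sym.
move=> xy; apply/setP => z; rewrite !inE; congr (_ && _).
by apply/idP/idP; apply: connect_trans; rewrite // adj_csym.
Qed.

Definition components : {set {set V}} := equivalence_partition (connect adj) V'.

Lemma components_partition : partition components V'.
Proof.
apply: equivalence_partitionP => x y z _ _ _; split=> [|xy]; first exact: connect0.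
have adj_csym := sym_connect_sym sub_adj_sym.
by apply/idP/idP; apply: connect_trans; rewrite // adj_csym.
Qed.

Lemma comp_in_components u : u \in V' -> comp u \in components.
Proof. exact: imset_f. Qed.

Lemma components_compE B x : B \in components -> x \in B -> B = comp x /\ x \in V'.
Proof.
case/imsetP => w _ ->; rewrite inE => /andP[xV wx].
by split=> //; apply: comp_vertices_connect.
Qed.

Definition arcs_at (B : {set V}) : {set V * V} :=
  [set e in E' | (e.1 \in B) || (e.2 \in B)].

Lemma card_components_at_arc_le1 e :
  e \in E' -> (#|[set B in components | (e.1 \in B) || (e.2 \in B)]| <= 1)%N.
Proof.
move=> eE; apply/card_le1_eqP => B1 B2; rewrite !inE => /andP[B1P e_B1] /andP[B2P e_B2].
have comp_ends : e.1 \in V' -> e.2 \in V' -> comp e.1 = comp e.2.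
  move=> e1V e2V; apply/comp_vertices_connect/connect1.
  by rewrite /sub_adj e1V e2V -surjective_pairing eE.
case/orP: e_B1 => /(components_compE B1P) [-> V1];
  case/orP: e_B2 => /(components_compE B2P) [-> V2]; by rewrite // comp_ends.
Qed.

Lemma sum_card_arcs_at_le : (\sum_(B in components) #|arcs_at B| <= #|E'|)%N.
Proof.
under eq_bigr => B _ do rewrite card_setId_sum.
rewrite exchange_big /= -[leqRHS]sum1_card; apply: leq_sum => e eE.
by rewrite -card_setId_sum card_components_at_arc_le1.
Qed.

Lemma all_regular_of_comp_card_le :
  (#|E'| <= #|V'|)%N ->
  (forall u, u \in V' -> #|comp u| <= #|comp_arcs V' E' u|)%N ->
  all_regular V' E'.
Proof.
move=> le_E'V' le_comp.
have le_B B : B \in components -> (#|B| <= #|arcs_at B| ?= iff (#|B| == #|arcs_at B|))%N.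
  by case/imsetP => w wV ->; apply/leqif_eq/le_comp.
have : (\sum_(B in components) #|B| == \sum_(B in components) #|arcs_at B|)%N.
  rewrite eqn_leq (leqif_sum le_B).1 -(card_partition components_partition) /=.
  exact: leq_trans sum_card_arcs_at_le le_E'V'.
rewrite (leqif_sum le_B).2 => /forall_inP eq_B u uV.
exact/eqP/eq_B/comp_in_components.
Qed.

End Components.

Lemma det_herm_laplacian_eq0 (C : numClosedFieldType) (V : finType)
    (E : {set V * V}) (V' : {set V}) (E' : {set V * V}) (omega : C) (u : V) :
  oriented_graph E -> E' \subset E -> `|omega| = 1 ->
  (#|comp_arcs V' E' u| < #|comp_vertices V' E' u|)%N ->
  \det (herm_laplacian omega V' E') = 0.
Proof.
move=> oriented_E sub_E'E omega_norm1 lt_comp.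
rewrite (herm_laplacianE omega_norm1 V' oriented_E sub_E'E); apply/eqP/det0P.
have [y nz_y yN] : exists2 y : 'rV_#|V'|, y != 0 & y *m incidence_mx omega V' E' = 0.
  apply: (exists_left_kernel_support
    (K := [set i | enum_val i \in comp_vertices V' E' u])
    (A := [set k | enum_val k \in comp_arcs V' E' u])).
    by rewrite !card_enum_val_preim ?comp_vertices_sub ?comp_arcs_sub.
  move=> i k; rewrite [i \in _]inE [k \in _]inE [_ \in comp_arcs _ _ _]inE mxE.
  rewrite (enum_valP k) /= negb_or => iK /andP[e1K e2K].
  have ne p : p \notin comp_vertices V' E' u -> (enum_val i == p) = false.
    by move=> pK; apply: contraNF pK => /eqP <-.
  by rewrite /incidence !ne // mulr0 subr0.
by exists y; rewrite // mulmxA yN mul0mx.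
Qed.

Theorem mainTheorem4 (C : numClosedFieldType) (V : finType) (E : {set V * V})
    (V' : {set V}) (E' : {set V * V}) (omega : C) :
  oriented_graph E ->
  substructure E V' E' ->
  (#|E'| <= #|V'|)%N ->
  `|omega| = 1 ->
  \det (herm_laplacian omega V' E') != 0 ->
  all_regular V' E'.
Proof.
move=> oriented_E sub_E'E le_E'V' omega_norm1 det_nz.
apply: all_regular_of_comp_card_le => // u _; rewrite leqNgt.
by apply: contraNN det_nz => /(det_herm_laplacian_eq0 oriented_E sub_E'E omega_norm1) ->.
Qed.
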